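(* Let $m$ be a positive integer and $k$ a positive integer. If $\nu_2(m)$ is odd and $k$ is even, then $S_k(m)$ is empty.
   Context: For a positive integer $x$, $\nu_2(x)$ denotes the largest integer $e$ such that $2^e$ divides $x$. For a positive integer $m$, consider positive rational solutions $(x,y)$ of $x^y = y^{mx}$ with $x \neq 1$. For such a solution, $r = \log y / \log x$ is a positive rational number (so $y = x^r$); write $r = a/b$ with $a,b$ positive coprime integers. For an integer $k \ge 1$, $S_k(m)$ denotes the set of such solutions $(x,y)$ for which $|a-b| = k$. *)

From HB Require Import structures.
From mathcomp Require Import all_boot all_order all_algebra.
From mathcomp Require Import reals exp.
Set Implicit Arguments. Unset Strict Implicit. Unset Printing Implicit Defensive.
Import Order.TTheory GRing.Theory Num.Theory.
Local Open Scope ring_scope.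

Definition is_solution (R : realType) (m : nat) (x y : rat) : Prop :=
  0 < x /\ 0 < y /\ x != 1 /\
  powR (ratr x : R) (ratr y) = powR (ratr y : R) (m%:R * ratr x).

Definition in_S (R : realType) (k m : nat) (x y : rat) : Prop :=
  is_solution R m x y /\
  exists a b : nat, (0 < a)%N /\ (0 < b)%N /\ coprime a b /\
    ln (ratr y : R) / ln (ratr x : R) = a%:R / b%:R /\
    `|(a%:Z - b%:Z)%R|%N = k.

(* Taking logarithms in x^y = y^(m x) with y = x^(a/b) gives y = m (a/b) x and
   y^b = x^a.  Since a and b are coprime with |a - b| even, both are odd.
   Writing x = p/q, the identity (m a p)^b q^a = b^b p^a q^b between natural
   numbers gives b (v(m) + v(p)) + a v(q) = a v(p) + b v(q) for the 2-adic
   valuation v, as v(a) = v(b) = 0; reducing mod 2 leaves v(m) even. *)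
From mathcomp Require Import all_boot all_order all_algebra.
From mathcomp Require Import reals exp ring.
Import Order.TTheory GRing.Theory Num.Theory.

Lemma odd_distn (a b : nat) : odd `|(a%:Z - b%:Z)%R| = odd a (+) odd b.
Proof.
case: (leqP b a) => [le_ba | /ltnW le_ab].
  by rewrite distnEl // oddB.
by rewrite distnEr // oddB // addbC.
Qed.

Lemma coprime_even_distn_odd [a b : nat] :
  coprime a b -> ~~ odd `|(a%:Z - b%:Z)%R| -> odd a && odd b.
Proof.
rewrite odd_distn => co_ab.
case odd_a: (odd a); case odd_b: (odd b) => //= _.
have : (2 %| gcdn a b)%N by rewrite dvdn_gcd !dvdn2 odd_a odd_b.
by move: co_ab; rewrite /coprime => /eqP ->.
Qed.

Lemma logn2_even_of_odd_exponents [m a b p q : nat] :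
  (0 < m)%N -> (0 < p)%N -> (0 < q)%N -> odd a -> odd b ->
  ((m * a * p) ^ b * q ^ a = p ^ a * b ^ b * q ^ b)%N -> ~~ odd (logn 2 m).
Proof.
move=> m_gt0 p_gt0 q_gt0 odd_a odd_b E.
have a_gt0 : (0 < a)%N by case: a odd_a {E}.
have b_gt0 : (0 < b)%N by case: b odd_b {E}.
have logn_a : logn 2 a = 0%N by rewrite logn_coprime ?coprime2n.
have logn_b : logn 2 b = 0%N by rewrite logn_coprime ?coprime2n.
have map_gt0 : (0 < m * a * p)%N by rewrite !muln_gt0 m_gt0 a_gt0 p_gt0.
move/(congr1 (logn 2)): E.
rewrite !lognM ?muln_gt0 ?expn_gt0 ?map_gt0 ?p_gt0 ?q_gt0 ?b_gt0 //.
rewrite !lognX !lognM ?muln_gt0 ?m_gt0 ?a_gt0 // logn_a logn_b.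
move/(congr1 odd); rewrite !(oddD, oddM) odd_a odd_b /=.
by case: (odd (logn 2 m)); case: (odd (logn 2 p)); case: (odd (logn 2 q)).
Qed.

Local Open Scope ring_scope.

Section LogarithmOfSolution.
Variables (R : realType) (X Y : R).
Hypotheses (X_gt0 : 0 < X) (Y_gt0 : 0 < Y) (X_neq1 : X != 1).

Let lnX_neq0 : ln X != 0. Proof. by rewrite ln_eq0. Qed.

Lemma powR_solution_linear (c r : R) :
  X `^ Y = Y `^ (c * X) -> ln Y / ln X = r -> Y = c * r * X.
Proof.
move=> /(congr1 (@ln R)); rewrite !ln_powR => E <-.
by apply: (mulIf lnX_neq0); rewrite E; field.
Qed.

Lemma ln_ratio_expr (a b : nat) :
  (0 < b)%N -> ln Y / ln X = a%:R / b%:R -> Y ^+ b = X ^+ a.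
Proof.
move=> b_gt0 E.
apply: ln_inj; [by rewrite posrE exprn_gt0 | by rewrite posrE exprn_gt0 |].
rewrite !lnXn // -[_ *+ b]mulr_natr -[_ *+ a]mulr_natr.
rewrite -(divfK lnX_neq0 (ln Y)) E; field.
by rewrite pnatr_eq0 -lt0n b_gt0.
Qed.

End LogarithmOfSolution.

Lemma posq_num_den [x : rat] :
  0 < x -> exists p q : nat, [/\ (0 < p)%N, (0 < q)%N & x = p%:R / q%:R].
Proof.
move=> x_gt0; exists `|numq x|%N, `|denq x|%N; split.
- by rewrite absz_gt0 numq_eq0 gt_eqF.
- by rewrite absz_gt0 denq_neq0.
- by rewrite !pmulrn !gez0_abs ?numq_ge0 ?ltW ?divq_num_den.
Qed.

Lemma solution_nat_equation [m a b : nat] [x y : rat] :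
  (0 < b)%N -> 0 < x -> y = m%:R * (a%:R / b%:R) * x -> y ^+ b = x ^+ a ->
  exists p q : nat, [/\ (0 < p)%N, (0 < q)%N &
    ((m * a * p) ^ b * q ^ a = p ^ a * b ^ b * q ^ b)%N].
Proof.
move=> b_gt0 x_gt0 Ey Exy.
have [p [q [p_gt0 q_gt0 Ex]]] := posq_num_den x_gt0.
exists p, q; split => //; apply/eqP; rewrite -(eqr_nat rat) !(natrM, natrX).
have b_neq0 : b%:R != 0 :> rat by rewrite pnatr_eq0 -lt0n.
have q_neq0 : q%:R != 0 :> rat by rewrite pnatr_eq0 -lt0n.
rewrite Ey Ex !exprMn !exprVn in Exy.
have qa_neq0 : q%:R ^+ a != 0 :> rat by rewrite expf_neq0.
have -> : p%:R ^+ a = p%:R ^+ a / q%:R ^+ a * q%:R ^+ a :> rat by rewrite divfK.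
rewrite -Exy !exprMn; apply/eqP; field.
by rewrite !expf_neq0.
Qed.

Theorem lemma4 (R : realType) (m k : nat) :
  (0 < m)%N -> (0 < k)%N -> odd (logn 2 m) -> ~~ odd k ->
  forall x y : rat, ~ in_S R k m x y.
Proof.
move=> m_gt0 _ odd_logm even_k x y.
move=> [[x_gt0 [y_gt0 [x_neq1 Exy]]] [a [b [_ [b_gt0 [co_ab [Eab dist_ab]]]]]]].
have /andP[odd_a odd_b] : odd a && odd b.
  by apply: coprime_even_distn_odd; rewrite ?dist_ab.
have X_gt0 : 0 < ratr x :> R by rewrite ltr0q.
have Y_gt0 : 0 < ratr y :> R by rewrite ltr0q.
have X_neq1 : ratr x != 1 :> R.
  by rewrite -(rmorph1 (ratr : rat -> R)) (inj_eq (fmorph_inj _)).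
have Ey : y = m%:R * (a%:R / b%:R) * x.
  apply: (fmorph_inj (ratr : rat -> R)); rewrite !rmorphM /= fmorphV /= !ratr_nat.
  exact: powR_solution_linear.
have Epow : y ^+ b = x ^+ a.
  apply: (fmorph_inj (ratr : rat -> R)); rewrite !rmorphXn.
  exact: ln_ratio_expr.
have [p [q [p_gt0 q_gt0 Epq]]] := solution_nat_equation b_gt0 x_gt0 Ey Epow.
have := logn2_even_of_odd_exponents m_gt0 p_gt0 q_gt0 odd_a odd_b Epq.
by rewrite odd_logm.
Qed.
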